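(* For any refund schemes $(R_j)_{j\in P}$ satisfying Contribution Monotonicity, there exist instances of the combinatorial civic crowdfunding game $\mathcal{M}_{CC}$ and contributions of the agents in $N\setminus\{i'\}$ such that agent $i'$ has no optimal strategy, i.e., the supremum of agent $i'$'s total utility over its feasible contribution vectors (given the others' contributions) is not attained.
   Context: Combinatorial civic crowdfunding game $\mathcal{M}_{CC}$: projects $P=\{1,\dots,p\}$ with target costs $T_j>0$; agents $N=\{1,\dots,n\}$ with budgets $\gamma_i\ge0$ and valuations $\theta_{ij}\ge0$. Agent $i$ contributes $x_{ij}\in\mathbb{R}_+$ with $\sum_j x_{ij}\le\gamma_i$; $C_j=\sum_i x_{ij}$; project $j$ funded iff $C_j\ge T_j$. Anonymous refund scheme $R_j(B_j,x_{ij},C_j)\ge0$ with bonus $B_j>0$ gives refund $r_{ij}$, with $\sum_i r_{ij}=B_j$. Utility of $i$ from $j$: $\theta_{ij}-x_{ij}$ if $C_j\ge T_j$, $r_{ij}$ if $C_j<T_j$; total utility is the sum over projects. Contribution Monotonicity: $R_j$ differentiable and strictly increasing in the contribution. *)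

From Stdlib Require Import Reals List Arith.
From Coquelicot Require Import Coquelicot.
Import ListNotations.
Open Scope R_scope.

(* Agents are indexed 0..n-1, projects 0..p-1. *)

Definition rsum (n : nat) (f : nat -> R) : R :=
  fold_right Rplus 0 (map f (seq 0 n)).

(* An anonymous refund scheme Rj (B, x, C): nonnegative refunds, and the
   refunds of any finite set of agents with (positive) total contribution C
   add up to the bonus B. *)
Definition is_refund_scheme (Rj : R -> R -> R -> R) : Prop :=
  (forall B x C, 0 < B -> 0 <= x -> x <= C -> 0 <= Rj B x C) /\
  (forall (B : R) (n : nat) (x : nat -> R), 0 < B ->
     (forall i, (i < n)%nat -> 0 <= x i) -> 0 < rsum n x ->
     rsum n (fun i => Rj B (x i) (rsum n x)) = B).

Definition contribution_monotone (Rj : R -> R -> R -> R) : Prop :=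
  forall B C, 0 < B -> 0 < C ->
    (forall x, 0 <= x <= C -> ex_derive (fun y => Rj B y C) x) /\
    (forall x1 x2, 0 <= x1 -> x1 < x2 -> x2 <= C -> Rj B x1 C < Rj B x2 C).

(* total contribution C_j of profile x (x i j = contribution of agent i to project j) *)
Definition total_contrib (n : nat) (x : nat -> nat -> R) (j : nat) : R :=
  rsum n (fun i => x i j).

Definition utility (n p : nat) (T : nat -> R) (theta : nat -> nat -> R)
    (Rs : nat -> R -> R -> R -> R) (B : nat -> R) (x : nat -> nat -> R) (i : nat) : R :=
  rsum p (fun j =>
    if Rle_dec (T j) (total_contrib n x j)
    then theta i j - x i j
    else Rs j (B j) (x i j) (total_contrib n x j)).

Definition feasible (p : nat) (g : R) (y : nat -> R) : Prop :=
  (forall j, (j < p)%nat -> 0 <= y j) /\ rsum p y <= g.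

Definition update (x : nat -> nat -> R) (i : nat) (y : nat -> R) : nat -> nat -> R :=
  fun k j => if Nat.eqb k i then y j else x k j.

(* A refund scheme with the sharing property must split the bonus additively
   among the parts of any fixed total contribution C, and Contribution
   Monotonicity makes the share monotone in the contribution; a monotone
   additive function on [0, C] is linear, so every such scheme is the
   proportional one, R(B, x, C) = B x / C.  Now take two agents and one
   project with target 2, bonus 1 and zero valuations, where the other agent
   contributes 1 and agent 0 has budget 1.  Contributing z < 1 leaves the
   project unfunded and pays z / (z + 1), which increases towards 1/2, while
   z = 1 funds the project and pays -1: the supremum 1/2 is never attained. *)
From Stdlib Require Import Reals Lra Lia.
From Coquelicot Require Import Coquelicot.
Open Scope R_scope.

Lemma nat_bracket (d x : R) (N : nat) :
  0 < d -> 0 <= x < INR N * d ->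
  exists k, (k < N)%nat /\ INR k * d <= x < INR (S k) * d.
Proof.
  intros Hd; induction N as [|N IH]; intros Hx.
  - simpl in Hx; lra.
  - destruct (Rlt_dec x (INR N * d)) as [Hlt|Hge].
    + destruct (IH (conj (proj1 Hx) Hlt)) as [k [Hk Hbr]].
      exists k; split; [lia | exact Hbr].
    + exists N; split; [lia | lra].
Qed.

Lemma eq0_of_unit_fraction_bound (u e : R) :
  (forall m, (0 < m)%nat -> Rabs u <= e / INR m) -> u = 0.
Proof.
  intros Hbound.
  destruct (Req_dec u 0) as [|Hu]; [assumption | exfalso].
  pose proof (Rabs_pos_lt u Hu) as Hpos.
  assert (He : 0 < e).
  { specialize (Hbound 1%nat ltac:(lia)); simpl in Hbound; lra. }
  destruct (archimed_cor1 (Rabs u / e)) as [m [Hm Hm0]].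
  { apply Rdiv_lt_0_compat; lra. }
  specialize (Hbound m Hm0).
  apply (Rmult_lt_compat_l e) in Hm; [|lra].
  replace (e * (Rabs u / e)) with (Rabs u) in Hm by (field; lra).
  unfold Rdiv in Hbound; lra.
Qed.

Section MonotoneAdditive.

Variables (f : R -> R) (C : R).
Hypothesis HC : 0 < C.
Hypothesis f_add :
  forall a b, 0 <= a -> 0 <= b -> a + b <= C -> f (a + b) = f a + f b.
Hypothesis f_mono : forall a b, 0 <= a -> a <= b -> b <= C -> f a <= f b.

Lemma additive_f0 : f 0 = 0.
Proof.
  pose proof (f_add 0 0 (Rle_refl 0) (Rle_refl 0) ltac:(lra)) as H.
  rewrite Rplus_0_r in H; lra.
Qed.

Lemma additive_nat_mul (k : nat) (d : R) :
  0 <= d -> INR k * d <= C -> f (INR k * d) = INR k * f d.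
Proof.
  intros Hd; induction k as [|k IH]; intros Hk.
  - rewrite !Rmult_0_l; exact additive_f0.
  - rewrite S_INR in *.
    assert (0 <= INR k) by apply pos_INR.
    replace ((INR k + 1) * d) with (INR k * d + d) in * by ring.
    rewrite f_add, IH; [ring | nra | nra | lra | lra].
Qed.

Lemma additive_unit_fraction (m : nat) :
  (0 < m)%nat -> f (C / INR m) = f C / INR m.
Proof.
  intros Hm.
  assert (Hmr : 0 < INR m) by (apply lt_0_INR; lia).
  assert (Hsplit : INR m * (C / INR m) = C) by (field; lra).
  pose proof (additive_nat_mul m (C / INR m)) as H.
  rewrite Hsplit in H.
  rewrite H; [field; lra | | lra].
  apply Rlt_le, Rdiv_lt_0_compat; lra.
Qed.

Lemma monotone_additive_approx (m : nat) (x : R) :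
  (0 < m)%nat -> 0 <= x < C -> Rabs (f x - f C * x / C) <= f C / INR m.
Proof.
  intros Hm Hx.
  assert (Hmr : 0 < INR m) by (apply lt_0_INR; lia).
  set (d := C / INR m).
  assert (Hd : 0 < d) by (apply Rdiv_lt_0_compat; lra).
  assert (HmdC : INR m * d = C) by (unfold d; field; lra).
  assert (HdC : d <= C).
  { rewrite <- HmdC, <- (Rmult_1_l d) at 1.
    apply Rmult_le_compat_r; [lra | apply (le_INR 1); lia]. }
  assert (Hfd : f d = f C / INR m) by apply additive_unit_fraction, Hm.
  assert (Hfd0 : 0 <= f d).
  { rewrite <- additive_f0; apply f_mono; lra. }
  destruct (nat_bracket d x m Hd ltac:(rewrite HmdC; lra)) as [k [Hk [Hlo Hhi]]].
  assert (HkC : INR (S k) * d <= C).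
  { rewrite <- HmdC; apply Rmult_le_compat_r; [lra | apply le_INR; lia]. }
  rewrite S_INR in *.
  assert (0 <= INR k) by apply pos_INR.
  assert (Hflo : INR k * f d <= f x).
  { rewrite <- (additive_nat_mul k d) by lra; apply f_mono; nra. }
  assert (Hfhi : f x <= (INR k + 1) * f d).
  { rewrite <- S_INR, <- (additive_nat_mul (S k) d) by (rewrite ?S_INR; lra).
    rewrite S_INR; apply f_mono; nra. }
  assert (Hlin : f C * x / C = f d * (x / d)).
  { rewrite Hfd; unfold d; field; lra. }
  assert (Hq : INR k <= x / d <= INR k + 1).
  { split; apply (Rmult_le_reg_r d); try lra;
      unfold Rdiv; rewrite Rmult_assoc, Rinv_l; lra. }
  rewrite Hlin, <- Hfd; apply Rabs_le; split; nra.
Qed.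

Lemma monotone_additive_linear (x : R) :
  0 <= x <= C -> f x = f C * x / C.
Proof.
  intros Hx.
  destruct (Req_dec x C) as [->|HxC]; [field; lra |].
  apply Rminus_diag_uniq; apply (eq0_of_unit_fraction_bound _ (f C)).
  intros m Hm; apply monotone_additive_approx; [exact Hm | lra].
Qed.

End MonotoneAdditive.

Section RefundScheme.

Variables (Rj : R -> R -> R -> R) (B C : R).
Hypothesis HR : is_refund_scheme Rj.
Hypothesis HB : 0 < B.
Hypothesis HC : 0 < C.

Lemma refund_sum (n : nat) (xs : nat -> R) :
  (forall i, (i < n)%nat -> 0 <= xs i) -> rsum n xs = C ->
  rsum n (fun i => Rj B (xs i) C) = B.
Proof.
  intros Hxs Hsum.
  rewrite <- Hsum; apply (proj2 HR); [exact HB | exact Hxs | lra].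
Qed.

Lemma refund_sole_contributor : Rj B C C = B.
Proof.
  pose proof (refund_sum 1 (fun _ => C)) as H.
  unfold rsum in H; simpl in H.
  rewrite <- H at 2; [ring | intros; lra | ring].
Qed.

Lemma refund_split (a b : R) :
  0 <= a -> 0 <= b -> a + b <= C -> Rj B (a + b) C = Rj B a C + Rj B b C.
Proof.
  intros Ha Hb Hab.
  pose proof (refund_sum 3 (fun i => match i with
    | 0%nat => a | 1%nat => b | _ => C - a - b end)) as H3.
  pose proof (refund_sum 2 (fun i => match i with
    | 0%nat => a + b | _ => C - a - b end)) as H2.
  unfold rsum in H3, H2; simpl in H3, H2.
  assert (E3 := H3 ltac:(intros [|[|]]; lra) ltac:(ring)).
  assert (E2 := H2 ltac:(intros [|]; lra) ltac:(ring)).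
  lra.
Qed.

End RefundScheme.

Lemma refund_proportional (Rj : R -> R -> R -> R) (B C x : R) :
  is_refund_scheme Rj -> contribution_monotone Rj ->
  0 < B -> 0 < C -> 0 <= x <= C -> Rj B x C = B * x / C.
Proof.
  intros HR HM HB HC Hx.
  rewrite <- (refund_sole_contributor Rj B C HR HB HC) at 2.
  apply (monotone_additive_linear (fun y => Rj B y C)); [exact HC | | | exact Hx].
  - intros a b Ha Hb Hab; apply refund_split; assumption.
  - intros a b Ha Hab Hb.
    destruct (Req_dec a b) as [->|Hne]; [lra |].
    apply Rlt_le, (proj2 (HM B C HB HC)); lra.
Qed.

(* Payoff of agent 0 contributing z in the instance used below: target 2,
   bonus 1, zero valuation, and the other agent contributing 1. *)
Definition deviation_utility (z : R) : R :=
  if Rle_dec 2 (z + 1) then - z else z / (z + 1).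

Lemma deviation_utility_no_max (z : R) :
  0 <= z <= 1 ->
  exists z', 0 <= z' <= 1 /\ deviation_utility z < deviation_utility z'.
Proof.
  intros Hz; unfold deviation_utility.
  destruct (Rle_dec 2 (z + 1)) as [Hfund|Hfail].
  - exists 0; split; [lra |].
    destruct (Rle_dec 2 (0 + 1)); [lra |].
    unfold Rdiv; rewrite Rmult_0_l; lra.
  - exists ((z + 1) / 2); split; [lra |].
    destruct (Rle_dec 2 ((z + 1) / 2 + 1)); [lra |].
    apply (Rmult_lt_reg_r ((z + 1) * ((z + 1) / 2 + 1))); [nra |].
    field_simplify; lra.
Qed.

Lemma feasible_single_project (g : R) (y : nat -> R) :
  feasible 1 g y <-> 0 <= y 0%nat <= g.
Proof.
  unfold feasible, rsum; simpl; split.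
  - intros [Hnn Hsum]; split; [apply Hnn; lia | lra].
  - intros Hy; split; [intros [|j] Hj; [lra | lia] | lra].
Qed.

Lemma instance_utility (Rs : nat -> R -> R -> R -> R) (y : nat -> R) :
  is_refund_scheme (Rs 0%nat) -> contribution_monotone (Rs 0%nat) ->
  0 <= y 0%nat <= 1 ->
  utility 2 1 (fun _ => 2) (fun _ _ => 0) Rs (fun _ => 1)
    (update (fun _ _ => 1) 0 y) 0
  = deviation_utility (y 0%nat).
Proof.
  intros HR HM Hy.
  unfold utility, total_contrib, update, deviation_utility, rsum; simpl.
  replace (y 0%nat + (1 + 0)) with (y 0%nat + 1) by ring.
  destruct (Rle_dec 2 (y 0%nat + 1)); [ring |].
  rewrite (refund_proportional _ 1 (y 0%nat + 1) (y 0%nat) HR HM); lra.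
Qed.

Theorem theorem5 :
  forall Rs : nat -> R -> R -> R -> R,
    (forall j, is_refund_scheme (Rs j) /\ contribution_monotone (Rs j)) ->
    exists (n p : nat) (T gamma : nat -> R) (theta : nat -> nat -> R) (B : nat -> R)
           (i' : nat) (x : nat -> nat -> R),
      (i' < n)%nat /\
      (forall j, (j < p)%nat -> 0 < T j) /\
      (forall i, (i < n)%nat -> 0 <= gamma i) /\
      (forall i j, (i < n)%nat -> (j < p)%nat -> 0 <= theta i j) /\
      (forall j, (j < p)%nat -> 0 < B j) /\
      (forall i, (i < n)%nat -> i <> i' -> feasible p (gamma i) (x i)) /\
      ~ (exists y, feasible p (gamma i') y /\
           forall y', feasible p (gamma i') y' ->
             utility n p T theta Rs B (update x i' y') i'
             <= utility n p T theta Rs B (update x i' y) i').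
Proof.
  intros Rs HRs.
  destruct (HRs 0%nat) as [HR HM].
  exists 2%nat, 1%nat, (fun _ => 2), (fun _ => 1), (fun _ _ => 0), (fun _ => 1),
    0%nat, (fun _ _ => 1).
  repeat split; intros; try lra; try lia.
  { apply feasible_single_project; lra. }
  intros [y [Hy Hopt]].
  apply feasible_single_project in Hy.
  destruct (deviation_utility_no_max (y 0%nat) Hy) as [z [Hz Hbetter]].
  specialize (Hopt (fun _ => z) (proj2 (feasible_single_project 1 _) Hz)).
  rewrite !instance_utility in Hopt by (simpl; assumption).
  simpl in Hopt; lra.
Qed.
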